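(* Let $q$ be a prime power, and let $\chi'$ and $\chi$ be the canonical additive characters of $\mathbb{F}_{q^2}$ and $\mathbb{F}_q$, respectively. For integers $e_1,e_2$ and $a,b\in\mathbb{F}_{q^2}$, define $$S_{(e_1,e_2)}(a,b):=\sum_{x\in\mathbb{F}_{q^2}^*}\chi'\!\left(a x^{(q+1)e_1}+b x^{e_2}\right).$$ If $a^q+a\neq 0$, $b\neq 0$ and $\gcd(q+1,e_2)=1$, then $$S_{(e_1,e_2)}(a,b)=-\sum_{z\in\mathbb{F}_q^*}\sum_{x\in\mathbb{F}_q^*}\chi\!\left(z+(a^q+a)x^{e_1}+z^{-1}b^{q+1}x^{e_2}\right).$$
   Context: For a finite field $F$ of characteristic $p$, the canonical additive character is $\chi(c)=e^{2\pi i\,\mathrm{Tr}_{F/\mathbb{F}_p}(c)/p}$. *)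

From HB Require Import structures.
From mathcomp Require Import all_boot all_order all_algebra all_field.
From mathcomp Require Import complex.
From mathcomp Require Import reals trigo.
Set Implicit Arguments. Unset Strict Implicit. Unset Printing Implicit Defensive.
Import Order.TTheory GRing.Theory Num.Theory.
Local Open Scope ring_scope.

Definition expi (R : realType) (t : R) : R[i] := Complex (cos t) (sin t).

(* Absolute trace Tr_{F/F_p}(c) = c + c^p + ... + c^(p^(m-1)) of an element c of
   a field F with p^m elements; here F is either L itself or the subfield
   {x in L | x^q = x}, and c is viewed inside L (the value lies in the prime
   subfield of L). *)
Definition abstrace (L : finFieldType) (p m : nat) (c : L) : L :=
  \sum_(i < m) c ^+ (p ^ i).

(* canonical additive character chi(c) = exp(2 pi i Tr(c)/p), where the prime
   field element Tr(c) is identified with the unique k in {0,..,p-1} with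
   k%:R = Tr(c). *)
Definition canchar (R : realType) (L : finFieldType) (p m : nat) (c : L) : R[i] :=
  \sum_(k < p | (k%:R : L) == abstrace p m c)
     expi ((2 * pi * (k%:R : R)) / (p%:R : R)).

From HB Require Import structures.
From mathcomp Require Import all_boot all_order all_algebra all_field.
From mathcomp Require Import complex.
From mathcomp Require Import reals trigo.
From mathcomp Require Import ring lra zify.
Import Order.TTheory GRing.Theory Num.Theory.

Set Implicit Arguments.
Unset Strict Implicit.
Unset Printing Implicit Defensive.

Local Open Scope ring_scope.

(* Write q = p^n, so that Tr_{q^2}(c) = Tr_q(c + c^q).  The norm x |-> x^(q+1)
   maps the nonzero elements of F_{q^2} onto F_q^* with fibres of size q + 1,
   and as gcd(q + 1, e2) = 1, x |-> b x^e2 maps the fibre over y bijectively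
   onto the fibre over b^(q+1) y^e2.  If x^(q+1) = y, then x^((q+1) e1) = y^e1 is
   in F_q, so c' = a x^((q+1) e1) + v with v = b x^e2 has
   c' + c'^q = (a^q + a) y^e1 + v + v^q, and everything reduces to
     sum_{v^(q+1) = c} chi(s + v + v^q) = - sum_{z in F_q^*} chi(z + s + c/z)
   for s, c in F_q with c <> 0.  For t in F_q, the v with v^(q+1) = c and
   v + v^q = t, and the z in F_q^* with z + c/z = t, are all roots of
   X^2 - t X + c, so there are at most 2 of them together; as their totals
   over t are q + 1 and q - 1, there are exactly 2 for every t, and the two
   sides differ by 2 sum_{t in F_q} chi(s + t) = 0. *)

Lemma card_lt_size_roots (F : fieldType) (T : finType) (f : T -> F)
    (A : {pred T}) (P : {poly F}) :
  P != 0 -> {in A &, injective f} -> {in A, forall x, root P (f x)} ->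
  (#|A| < size P)%N.
Proof.
move=> P0 f_inj rootPf; rewrite cardE -(size_map f).
apply: max_poly_roots => //.
  by apply/allP=> _ /mapP[x xA ->]; apply: rootPf; rewrite -mem_enum.
by rewrite map_inj_in_uniq ?enum_uniq // => x y; rewrite !mem_enum; apply: f_inj.
Qed.

Lemma sum_nat_eq_bound (T : finType) (I : {pred T}) (f : T -> nat) (B M : nat) :
  (0 < B)%N -> {in I, forall i, f i <= B}%N -> (#|I| <= M)%N ->
  (\sum_(i in I) f i = B * M)%N -> {in I, forall i, f i = B} /\ #|I| = M.
Proof.
move=> B_gt0 fB IM sum_f.
have sum_gap : (\sum_(i in I) (B - f i) + \sum_(i in I) f i = #|I| * B)%N.
  by rewrite -big_split -sum_nat_const; apply: eq_bigr => i /fB/subnK.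
have card_I : #|I| = M by nia.
split=> // i Ii; apply/eqP; rewrite eqn_leq fB //= -subn_eq0.
have /eqP : (\sum_(i in I) (B - f i) = 0)%N by nia.
by rewrite sum_nat_eq0 => /forall_inP/(_ i Ii).
Qed.

Lemma card_partition (T J : finType) (P : pred T) (g : T -> J) (Q : pred J) :
  (forall x, P x -> Q (g x)) ->
  #|[pred x | P x]| = (\sum_(j | Q j) #|[pred x | P x && (g x == j)]|)%N.
Proof.
move=> PQg; rewrite -sum1_card (partition_big g Q) //=.
by apply: eq_bigr => j _; rewrite sum1dep_card; apply: eq_card => x; rewrite !inE.
Qed.

Lemma unit_pow_coprime (F : fieldType) (u : F) (m : nat) (e : int) :
  gcdz m e = 1%N -> u != 0 -> u ^+ m = 1 -> u ^ e = 1 -> u = 1.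
Proof.
move=> coprime_me u0 um ue.
have [k [l kl]] := Bezoutz m e; rewrite coprime_me in kl.
have -> : u = u ^ (k * m + l * e) by rewrite kl expr1z.
rewrite expfzDr // [k * _]mulrC [l * _]mulrC -!exprz_exp.
by rewrite -exprnP um ue !exp1rz mulr1.
Qed.

Section Expi.
Variable R : realType.

Lemma expiD (s t : R) : expi (s + t) = expi s * expi t.
Proof. by rewrite /expi cosD sinD [RHS]/GRing.mul /=; congr Complex; ring. Qed.

Lemma expiD2pi (t : R) : expi (t + pi *+ 2) = expi t.
Proof. by rewrite /expi cosD2pi sinD2pi. Qed.

Lemma expi_neq1 (t : R) : 0 < t < pi *+ 2 -> expi t != 1.
Proof.
move=> /andP[t_gt0 t_lt2pi]; apply/negP => /eqP[cos_t _].
have sin_half : 0 < sin (t / 2).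
  by apply: sin_gt0_pi; apply/andP; split; rewrite -mulr_natr in t_lt2pi; lra.
have : cos t = 1 - (sin (t / 2)) ^+ 2 *+ 2.
  by rewrite -{1}[t](@mulfVK _ 2) ?pnatr_eq0 // mulr_natr cos_mulr2n cos2sin2; ring.
by rewrite cos_t; nra.
Qed.

Definition expi_frac (m k : nat) : R[i] := expi (2 * pi * k%:R / m%:R).

Lemma expi_fracD m k1 k2 : (k1 < m)%N -> (k2 < m)%N ->
  expi_frac m ((k1 + k2) %% m) = expi_frac m k1 * expi_frac m k2.
Proof.
move=> k1m k2m; have m0 : (m%:R : R) != 0 by rewrite pnatr_eq0 -lt0n; lia.
rewrite /expi_frac -expiD; case: (ltnP (k1 + k2) m) => [lt_km | le_mk].
  by rewrite modn_small // natrD mulrDr mulrDl.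
have -> : ((k1 + k2) %% m = k1 + k2 - m)%N.
  by rewrite -{1}(subnK le_mk) modnDr modn_small; lia.
rewrite -expiD2pi; congr expi; rewrite natrB // natrD -mulr_natr; field; exact: m0.
Qed.

Lemma expi_frac_neq1 m k : (0 < k < m)%N -> expi_frac m k != 1.
Proof.
move=> /andP[k_gt0 k_lt_m]; apply: expi_neq1.
have pi_gt0 := @pi_gt0 R.
have frac_gt0 : 0 < (k%:R : R) / m%:R by rewrite divr_gt0 ?ltr0n //; lia.
have frac_lt1 : (k%:R : R) / m%:R < 1.
  by rewrite ltr_pdivrMr ?ltr0n ?mul1r ?ltr_nat //; lia.
rewrite -mulr_natr -!mulrA; apply/andP; split; nra.
Qed.

End Expi.

Arguments expi_frac {R}.

Section PrimeSubfield.
Variables (R : realType) (L : fieldType) (p : nat).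
Hypothesis charL : p \in [pchar L].

Let p_prime : prime p. Proof. exact: pcharf_prime charL. Qed.

Lemma natr_inj_small k1 k2 : (k1 < p)%N -> (k2 < p)%N ->
  ((k1%:R : L) == k2%:R) = (k1 == k2).
Proof.
wlog le_k12 : k1 k2 / (k1 <= k2)%N.
  move=> W k1p k2p; case: (leqP k1 k2) => [le_k12 | /ltnW le_k21]; first exact: W.
  by rewrite eq_sym W // eq_sym.
move=> _ k2p; rewrite eq_sym -subr_eq0 -natrB // -(dvdn_pcharf charL).
apply/idP/eqP => [dvd_p|->]; last by rewrite subnn dvdn0.
suff : (k2 - k1 = 0)%N by lia.
by apply/eqP; apply: contraTT dvd_p => ?; rewrite gtnNdvd ?lt0n //; lia.
Qed.

Lemma frobenius_fixed_natr (x : L) :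
  x ^+ p = x -> exists2 k, (k < p)%N & x = k%:R.
Proof.
move=> xp; have [k /eqP xk | not_natr] := pickP (fun k : 'I_p => x == k%:R).
  by exists k.
pose f (i : 'I_p.+1) : L := if (i < p)%N then (i : nat)%:R else x.
pose P : {poly L} := 'X^p - 'X.
have size_P : size P = p.+1.
  by rewrite size_polyDl ?size_polyXn // size_polyN size_polyX ltnS prime_gt1.
suff : (#|'I_p.+1| < size P)%N by rewrite card_ord size_P ltnn.
apply: (@card_lt_size_roots _ _ f).
- by rewrite -size_poly_eq0 size_P.
- move=> i j _ _; rewrite /f.
  case: (ltnP i p) => ip; case: (ltnP j p) => jp.
  + by move/eqP; rewrite natr_inj_small // => /eqP/val_inj.
  + by move=> e; have := not_natr (Ordinal ip); rewrite /= e eqxx.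
  + by move=> e; have := not_natr (Ordinal jp); rewrite /= -e eqxx.
  + by move=> _; apply: ord_inj; have := ltn_ord i; have := ltn_ord j; lia.
- move=> i _; rewrite rootE !hornerE /f subr_eq0; case: ifP => _; last exact/eqP.
  by rewrite -(pFrobenius_autE charL) rmorph_nat.
Qed.

Lemma frobeniusXD k (x y : L) : (x + y) ^+ (p ^ k) = x ^+ (p ^ k) + y ^+ (p ^ k).
Proof. by apply: exprDn_pchar; rewrite (eq_pnat _ (pcharf_eq charL)) pnatX pnat_id. Qed.

Definition addchar (u : L) : R[i] :=
  \sum_(k < p | (k%:R : L) == u) expi_frac p k.

Lemma addchar_natr k : (k < p)%N -> addchar k%:R = expi_frac p k.
Proof.
move=> kp; rewrite /addchar (big_pred1 (Ordinal kp)) // => i /=.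
by rewrite natr_inj_small.
Qed.

Lemma addcharD u v : u ^+ p = u -> v ^+ p = v ->
  addchar (u + v) = addchar u * addchar v.
Proof.
move=> /frobenius_fixed_natr[k1 k1p ->] /frobenius_fixed_natr[k2 k2p ->].
rewrite !addchar_natr // -expi_fracD // -natrD -(GRing.natr_mod_pchar charL).
by rewrite addchar_natr // ltn_pmod // prime_gt0.
Qed.

Lemma addchar_neq1 u : u ^+ p = u -> u != 0 -> addchar u != 1.
Proof.
move=> /frobenius_fixed_natr[k kp ->] k0; rewrite addchar_natr //.
by apply: expi_frac_neq1; rewrite kp andbT lt0n; apply: contraNneq k0 => ->.
Qed.

End PrimeSubfield.

Lemma canchar_abstrace (R : realType) (L : finFieldType) p m (c : L) :
  canchar R p m c = addchar R p (abstrace p m c).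
Proof. by []. Qed.

Section AbsoluteTrace.
Variables (L : finFieldType) (p : nat).
Hypothesis charL : p \in [pchar L].

Lemma abstraceD m (x y : L) : abstrace p m (x + y) = abstrace p m x + abstrace p m y.
Proof. by rewrite /abstrace -big_split; apply: eq_bigr => i _; rewrite frobeniusXD. Qed.

Lemma abstrace_frobenius m (c : L) : (0 < m)%N -> c ^+ (p ^ m) = c ->
  abstrace p m c ^+ p = abstrace p m c.
Proof.
case: m => // m _ cpm; rewrite /abstrace.
rewrite -(pFrobenius_autE charL) rmorph_sum /=.
under eq_bigr do rewrite (pFrobenius_autE charL) -exprM -expnSr.
by rewrite big_ord_recr big_ord_recl /= cpm expn0 expr1 addrC.
Qed.

Lemma abstrace_double m (c : L) :
  abstrace p (2 * m) c = abstrace p m (c + c ^+ (p ^ m)).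
Proof.
rewrite abstraceD /abstrace mul2n -addnn big_split_ord /=; congr (_ + _).
by apply: eq_bigr => i _; rewrite -exprM -expnD.
Qed.

Lemma canchar_double (R : realType) m (c : L) :
  canchar R p (2 * m) c = canchar R p m (c + c ^+ (p ^ m)).
Proof. by rewrite !canchar_abstrace abstrace_double. Qed.

End AbsoluteTrace.

Section QuadraticExtension.
Variables (R : realType) (L : finFieldType) (p n : nat).
Hypotheses (p_prime : prime p) (n_gt0 : (0 < n)%N) (card_L : #|L| = ((p ^ n) ^ 2)%N).

Local Notation q := (p ^ n)%N.
Local Notation Fq x := (x ^+ q == x).
Local Notation chi c := (canchar R p n c).

Let charL : p \in [pchar L].
Proof. by apply: (card_finPcharP (n := (n * 2)%N)); rewrite // expnM. Qed.

Let q_gt1 : (1 < q)%N.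
Proof. by rewrite -[1%N](expn0 p) ltn_exp2l ?prime_gt1. Qed.

Lemma frobeniusq_invol (x : L) : (x ^+ q) ^+ q = x.
Proof. by rewrite -exprM mulnn -card_L expf_card. Qed.

Lemma Fq0 : Fq (0 : L).
Proof. by rewrite expr0n -[q == 0%N]negbK -lt0n ltnW. Qed.

Lemma FqD (x y : L) : Fq x -> Fq y -> Fq (x + y).
Proof. by rewrite frobeniusXD // => /eqP-> /eqP->. Qed.

Lemma FqN (x : L) : Fq x -> Fq (- x).
Proof.
rewrite exprNn_pchar ?(eq_pnat _ (pcharf_eq charL)) ?pnatX ?pnat_id //.
by move=> /eqP->.
Qed.

Lemma FqM (x y : L) : Fq x -> Fq y -> Fq (x * y).
Proof. by rewrite exprMn => /eqP-> /eqP->. Qed.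

Lemma FqV (x : L) : Fq x -> Fq x^-1.
Proof. by rewrite exprVn => /eqP->. Qed.

Lemma Fqz (x : L) (e : int) : Fq x -> Fq (x ^ e).
Proof. by rewrite !exprnP exprzAC -!exprnP => /eqP->. Qed.

Lemma Fq_norm (x : L) : Fq (x ^+ q.+1).
Proof. by rewrite -exprM mulSn exprD exprM frobeniusq_invol exprS mulrC. Qed.

Lemma Fq_trace (x : L) : Fq (x + x ^+ q).
Proof. by rewrite frobeniusXD // frobeniusq_invol addrC. Qed.

Lemma card_norm_fibre_le (y : L) : (#|[pred x | x ^+ q.+1 == y]| <= q.+1)%N.
Proof.
rewrite -ltnS -(size_XnsubC y (ltn0Sn q)).
apply: (@card_lt_size_roots _ _ id); first by rewrite -size_poly_eq0 size_XnsubC.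
  by [].
by move=> x; rewrite inE rootE !hornerE subr_eq0.
Qed.

Lemma card_Fq_units_le : (#|[pred z : L | (z != 0%R) && Fq z]| <= q.-1)%N.
Proof.
have q1_gt0 : (0 < q.-1)%N by lia.
rewrite -ltnS -(size_XnsubC (1 : L) q1_gt0).
apply: (@card_lt_size_roots _ _ id); first by rewrite -size_poly_eq0 size_XnsubC.
  by [].
move=> z; rewrite inE => /andP[z0 /eqP zq]; rewrite rootE !hornerE subr_eq0.
by apply/eqP/(mulIf z0); rewrite mul1r -exprSr prednK ?zq //; lia.
Qed.

(* The norm maps the q^2 - 1 nonzero elements into the at most q - 1 nonzero
   elements of F_q with fibres of size at most q + 1, so all bounds are tight. *)
Lemma card_norm_fibres :
  {in [pred y : L | (y != 0) && Fq y], forall y, #|[pred x | x ^+ q.+1 == y]| = q.+1}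
  /\ #|[pred z : L | (z != 0) && Fq z]| = q.-1.
Proof.
apply: sum_nat_eq_bound => //; first by move=> y _; apply: card_norm_fibre_le.
  exact: card_Fq_units_le.
have -> : (q.+1 * q.-1 = #|[pred x : L | x != 0%R]|)%N.
  by rewrite -[#|_|]/#|predC1 0| cardC1 card_L; nia.
rewrite -sum1_card.
rewrite [RHS](partition_big (fun x => x ^+ q.+1) [pred y | (y != 0) && Fq y]).
  apply: eq_bigr => y /andP[y0 _]; rewrite sum1_card; apply: eq_card => x.
  rewrite !inE unfold_in /= !inE andb_idl // => /eqP xy.
  by apply: contraNneq y0 => x0; rewrite -xy x0 expr0n.
by move=> x x0; rewrite inE Fq_norm expf_neq0.
Qed.

Lemma card_Fq : #|[pred z : L | Fq z]| = q.
Proof.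
rewrite (cardD1 0) inE Fq0 (eq_card (B := [pred z | (z != 0) && Fq z])).
  by rewrite card_norm_fibres.2; lia.
by move=> z; rewrite !inE.
Qed.

(* Tr_{F_q/F_p} is a polynomial of degree p^(n-1) < q, so it cannot vanish on F_q. *)
Lemma exists_abstrace_neq0 : exists2 t : L, Fq t & abstrace p n t != 0.
Proof.
have [t /andP[]|trace0] := pickP (fun t : L => Fq t && (abstrace p n t != 0)).
  by exists t.
have [n' n_eq] : exists n', n = n'.+1 by exists n.-1; lia.
pose T : {poly L} := \sum_(i < n) 'X^(p ^ i).
have size_T : size T = (p ^ n').+1.
  rewrite /T n_eq big_ord_recr /= addrC size_polyDl ?size_polyXn //.
  apply: leq_ltn_trans (size_sum _ _ _) _; rewrite ltnS.
  by apply/bigmax_leqP => i _; rewrite size_polyXn ltn_exp2l ?prime_gt1.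
suff : (q < size T)%N.
  by rewrite size_T n_eq expnS; have := prime_gt1 p_prime; have := expn_gt0 p n'; nia.
rewrite -card_Fq; apply: (@card_lt_size_roots _ _ id).
- by rewrite -size_poly_eq0 size_T.
- by [].
- move=> t; rewrite inE => Fq_t; rewrite rootE /T horner_sum.
  have := trace0 t; rewrite /= Fq_t => /negbFE/eqP trace_t.
  by rewrite -[X in _ == X]trace_t; apply/eqP; apply: eq_bigr => i _; rewrite hornerXn.
Qed.

Lemma chiD (x y : L) : Fq x -> Fq y -> chi (x + y) = chi x * chi y.
Proof.
move=> /eqP Fq_x /eqP Fq_y.
by rewrite !canchar_abstrace abstraceD // addcharD // abstrace_frobenius.
Qed.

Lemma sum_chi_Fq_shift (s : L) : Fq s ->
  \sum_(t | Fq t) chi (s + t) = \sum_(t : L | Fq t) chi t.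
Proof.
move=> Fq_s; rewrite [RHS](reindex_inj (addrI s)); apply: eq_bigl => t.
apply/idP/idP => [|Fq_st]; first exact: FqD.
by rewrite -(addKr s t); apply: FqD => //; apply: FqN.
Qed.

Lemma sum_chi_Fq : \sum_(t : L | Fq t) chi t = 0.
Proof.
have [t0 Fq_t0 trace_t0] := exists_abstrace_neq0.
have /eqP := sum_chi_Fq_shift Fq_t0.
under eq_bigr => t Fq_t do rewrite chiD //.
rewrite -mulr_sumr -subr_eq0 -{2}[\sum_(t | Fq t) chi t]mul1r -mulrBl mulf_eq0.
case/orP => [|/eqP //]; rewrite subr_eq0 canchar_abstrace => /eqP chi_t0.
have := addchar_neq1 R charL (abstrace_frobenius charL n_gt0 (eqP Fq_t0)) trace_t0.
by rewrite chi_t0 eqxx.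
Qed.

Lemma card_quadratic_solutions (c t : L) :
  (#|[pred v : L | ((v ^+ q.+1 == c) && (v + v ^+ q == t))%R]|
   + #|[pred z : L | ((z != 0) && Fq z && (z + z^-1 * c == t))%R]| <= 2)%N.
Proof.
set PM := [pred v | _]; set PN := [pred z | _].
pose Q := [set x : L | x ^+ 2 - t * x + c == 0].
have PM_Q : {subset PM <= Q}.
  move=> v; rewrite !inE => /andP[/eqP <- /eqP <-].
  by rewrite (exprS v q); move: (v ^+ q) => w; apply/eqP; ring.
have PN_Q : {subset PN <= Q}.
  by move=> z; rewrite !inE => /andP[/andP[z0 _] /eqP <-]; apply/eqP; field.
have other_root r r' : r \in Q -> r' \in Q -> (r' == r) || (r' == t - r).
  rewrite !inE => /eqP Qr /eqP Qr'.
  have : (r' - r) * (r' + r - t) == 0.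
    have -> : (r' - r) * (r' + r - t)
              = (r' ^+ 2 - t * r' + c) - (r ^+ 2 - t * r + c) by ring.
    by rewrite Qr Qr' subrr.
  rewrite mulf_eq0 !subr_eq0 => /orP[-> // | /eqP e].
  by apply/orP; right; apply/eqP; rewrite -e; ring.
have card_Q : (#|Q| <= 2)%N.
  have [-> | [r Qr]] := set_0Vmem Q; first by rewrite cards0.
  apply: (@leq_trans #|[set r; t - r]|); last by rewrite cards2; case: (r != t - r).
  by apply/subset_leq_card/subsetP => r' Qr'; rewrite !inE other_root.
have [w /andP[PMw PNw] | disjoint_MN] := pickP [predI PM & PN].
  (* A common solution w forces t = 2 w and c = w^2: then w is the only root. *)
  have Q_w r : r \in Q -> r = w.
    move=> Qr; move: (PMw) (PNw).
    rewrite !inE => /andP[_ /eqP w_t] /andP[/andP[_ /eqP w_q] _].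
    case/orP: (other_root w r (PM_Q _ PMw) Qr) => /eqP // ->.
    by rewrite -w_t w_q; ring.
  have card_le1 (A : {pred L}) : {subset A <= Q} -> (#|A| <= 1)%N.
    move=> AQ; rewrite -(cards1 w) -cardsE; apply/subset_leq_card/subsetP => x.
    by rewrite !inE => Ax; apply/eqP/Q_w/AQ.
  exact: leq_add (card_le1 _ PM_Q) (card_le1 _ PN_Q).
rewrite -(cardsE PM) -(cardsE PN) -cardsUI.
have -> : [set x in PM] :&: [set x in PN] = set0.
  by apply/setP => x; rewrite !inE; have := disjoint_MN x; rewrite /= => ->.
rewrite cards0 addn0; apply: leq_trans card_Q; apply: subset_leq_card.
rewrite subUset; apply/andP; split; apply/subsetP => x; rewrite in_set.
  exact: PM_Q.
exact: PN_Q.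
Qed.

Lemma sum_chi_norm_fibre (s c : L) : Fq s -> c != 0 -> Fq c ->
  \sum_(v | v ^+ q.+1 == c) chi (s + (v + v ^+ q))
  = - \sum_(z | (z != 0) && Fq z) chi (z + s + z^-1 * c).
Proof.
move=> Fq_s c0 Fq_c.
pose nM t := #|[pred v : L | ((v ^+ q.+1 == c) && (v + v ^+ q == t))%R]|.
pose nN t := #|[pred z : L | ((z != 0) && Fq z && (z + z^-1 * c == t))%R]|.
have Fq_kloosterman z : (z != 0) && Fq z -> Fq (z + z^-1 * c).
  by case/andP=> _ Fq_z; apply: FqD => //; apply: FqM => //; apply: FqV.
have sum_nM : (\sum_(t | Fq t) nM t)%N = q.+1.
  rewrite -(card_norm_fibres.1 c) ?inE ?c0 //.
  rewrite (card_partition (g := fun v => v + v ^+ q) (Q := fun t => Fq t)) //.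
  by move=> v _; apply: Fq_trace.
have sum_nN : (\sum_(t | Fq t) nN t)%N = q.-1.
  by rewrite -card_norm_fibres.2
    (card_partition (g := fun z => z + z^-1 * c) (Q := fun t => Fq t)).
have nMN t : Fq t -> (nM t + nN t)%N = 2.
  have [] // := @sum_nat_eq_bound _ [pred t | Fq t] (fun t => nM t + nN t)%N 2 q isT
    (fun t _ => card_quadratic_solutions c t).
  - by rewrite card_Fq.
  - by rewrite big_split /= sum_nM sum_nN; lia.
  - by move=> nMN_2 _; apply: nMN_2.
have sum_fibre (P : pred L) (g : L -> L) (k : L -> nat) :
    (forall x, P x -> Fq (g x)) ->
    (forall t, Fq t -> #|[pred x | P x && (g x == t)]| = k t) ->
    \sum_(x | P x) chi (s + g x) = \sum_(t | Fq t) chi (s + t) *+ k t.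
  move=> Pg k_card; rewrite (partition_big g (fun t => Fq t)) //=.
  apply: eq_bigr => t Fq_t; rewrite -k_card // -sumr_const.
  by apply: eq_big => [x | x /andP[_ /eqP ->]]; rewrite ?inE.
rewrite (sum_fibre _ _ nM) //; last by move=> v _; apply: Fq_trace.
rewrite [in RHS](eq_bigr (fun z => chi (s + (z + z^-1 * c)))); last first.
  by move=> z _; rewrite addrAC addrC.
rewrite (sum_fibre _ _ nN) //.
apply/eqP; rewrite -addr_eq0 -big_split /=.
under eq_bigr => t Fq_t do rewrite -mulrnDr nMN //.
by rewrite sumrMnl sum_chi_Fq_shift // sum_chi_Fq mul0rn.
Qed.

Lemma sum_norm_fibre_twist (V : nmodType) (F : L -> V) (b y : L) (e : int) :
  gcdz q.+1 e = 1%N -> b != 0 -> y != 0 -> Fq y ->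
  \sum_(x | (x != 0) && (x ^+ q.+1 == y)) F (b * x ^ e)
  = \sum_(v | v ^+ q.+1 == b ^+ q.+1 * y ^ e) F v.
Proof.
move=> coprime_e b0 y0 Fq_y; set c := b ^+ q.+1 * y ^ e.
have c0 : c != 0 by rewrite mulf_neq0 ?expf_neq0 ?expfz_neq0.
have Fq_c : Fq c by rewrite FqM ?Fq_norm ?Fqz.
pose twist x := b * x ^ e.
pose A := [set x : L | (x != 0) && (x ^+ q.+1 == y)].
pose B := [set v : L | v ^+ q.+1 == c].
have card_A : #|A| = q.+1.
  rewrite -(card_norm_fibres.1 y) ?inE ?y0 //; apply: eq_card => x; rewrite !inE.
  rewrite andb_idl // => /eqP xy; apply: contraNneq y0 => x0.
  by rewrite -xy x0 expr0n.
have card_B : #|B| = q.+1.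
  rewrite -(card_norm_fibres.1 c) ?inE ?c0 //.
  by apply: eq_card => v; rewrite !inE.
have twist_inj : {in A &, injective twist}.
  move=> x1 x2; rewrite !inE => /andP[x10 /eqP x1y] /andP[x20 /eqP x2y].
  move=> /(mulfI b0) x12e; apply: divr1_eq.
  apply: (unit_pow_coprime coprime_e); first by rewrite mulf_neq0 ?invr_eq0.
    by rewrite exprMn exprVn x1y x2y divff.
  by rewrite exprzMl ?unitfE ?invr_eq0 // -expfV x12e divff // expfz_neq0.
have twist_AB : twist @: A = B.
  apply/eqP; rewrite eqEcard card_in_imset // card_A card_B leqnn andbT.
  apply/subsetP => _ /imsetP[x + ->]; rewrite !inE => /andP[_ /eqP xy].
  by rewrite /twist exprMn !exprnP exprzAC -!exprnP xy.
rewrite (eq_bigl [in A]); last by move=> x; rewrite !inE.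
rewrite (eq_bigl [in B] F); last by move=> v; rewrite !inE.
by rewrite -twist_AB big_imset.
Qed.

Lemma traceq_mulD (a u w : L) : Fq u ->
  (a * u + w) + (a * u + w) ^+ q = (a ^+ q + a) * u + (w + w ^+ q).
Proof. by move=> /eqP Fq_u; rewrite frobeniusXD // exprMn Fq_u; ring. Qed.

Lemma sum_chi_norm_fibre_twist (s b y : L) (e : int) :
  gcdz q.+1 e = 1%N -> b != 0 -> y != 0 -> Fq y -> Fq s ->
  \sum_(x | (x != 0) && (x ^+ q.+1 == y)) chi (s + (b * x ^ e + (b * x ^ e) ^+ q))
  = - \sum_(z | (z != 0) && Fq z) chi (z + s + z^-1 * b ^+ q.+1 * y ^ e).
Proof.
move=> coprime_e b0 y0 Fq_y Fq_s.
rewrite (sum_norm_fibre_twist (fun v => chi (s + (v + v ^+ q)))) //.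
rewrite sum_chi_norm_fibre ?mulf_neq0 ?expf_neq0 ?expfz_neq0 ?FqM ?Fq_norm ?Fqz //.
by under eq_bigr do rewrite mulrA.
Qed.

End QuadraticExtension.

Theorem lemma2 (R : realType) (L : finFieldType) (p n : nat)
  (hp : prime p) (hn : (0 < n)%N) (hL : #|L| = ((p ^ n) ^ 2)%N)
  (e1 e2 : int) (a b : L)
  (ha : a ^+ (p ^ n) + a != 0) (hb : b != 0)
  (hgcd : gcdz ((p ^ n).+1)%:Z e2 = 1%N) :
  \sum_(x : L | x != 0)
      canchar R p (2 * n) (a * x ^ (((p ^ n).+1)%:Z * e1) + b * x ^ e2)
  = - \sum_(z : L | (z != 0) && (z ^+ (p ^ n) == z))
        \sum_(x : L | (x != 0) && (x ^+ (p ^ n) == x))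
          canchar R p n (z + (a ^+ (p ^ n) + a) * x ^ e1
                           + z^-1 * b ^+ ((p ^ n).+1) * x ^ e2).
Proof.
have charL : p \in [pchar L].
  by apply: (card_finPcharP (n := (n * 2)%N)); rewrite // expnM.
set q := (p ^ n)%N; set A := a ^+ q + a.
have Fq_A : A ^+ q == A by rewrite /A addrC Fq_trace.
under eq_bigr => x _ do
  rewrite canchar_double // -exprz_exp -exprnP traceq_mulD ?Fqz ?Fq_norm //.
rewrite (partition_big (fun x => x ^+ q.+1) (fun y => (y != 0) && (y ^+ q == y))) /=;
  last by move=> x x0; rewrite Fq_norm // expf_neq0.
rewrite exchange_big -sumrN; apply: eq_bigr => y /andP[y0 Fq_y].
under eq_bigr => x /andP[_ /eqP xy] do rewrite xy.
by rewrite sum_chi_norm_fibre_twist // FqM ?Fqz.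
Qed.
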